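(* Let $n>24$, $0<\epsilon<\frac13$, $\delta>0$, $s>0$, and $m=\epsilon^{-2}n^{1+\delta}$ (assumed to be an integer). Let $$A=\left\{y\in U^m:\ \left|\sum_{i=1}^n\frac{k_i(y)(k_i(y)-1)}{m(m-1)}\cdot\frac1{\|p\|^2}-1\right|\le 3\epsilon\right\}$$ and $C_s=\{x\in U^m: d_T(x,A)<s\}$. Then for every $x\in C_s$ there is $y\in A$ such that $$\left|\sum_{i=1}^n\frac{k_i(x)(k_i(x)-1)}{m(m-1)}-\sum_{i=1}^n\frac{k_i(y)(k_i(y)-1)}{m(m-1)}\right|\le \epsilon\,\|p\|^2\left(\frac{6s}{n^{\delta/2}}+\frac{5s^2\epsilon}{n^{\delta}}\right).$$
   Context: Standing setup: $U$ is a finite set (the key space) with a probability measure $q$; $T=\{1,\dots,n\}$; $h:U\to T$ is an arbitrary function. $p_i=\sum_{u\in h^{-1}(i)}q(u)$ and $\|p\|^2=\sum_{i=1}^n p_i^2$. For $x=(x_1,\dots,x_m)\in U^m$, $k_i(x)=|\{j: h(x_j)=i\}|$. Talagrand's convex distance: $d_T(x,A)=\sup\{\inf_{y\in A}\sum_{j=1}^m\alpha_j\mathbf 1(x_j\ne y_j)\ :\ \alpha\in\mathbb R^m,\ \sum_j\alpha_j^2\le 1\}$, where $\mathbf 1(x_j\ne y_j)$ is $1$ if $x_j\ne y_j$ and $0$ otherwise. *)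

From HB Require Import structures.
From mathcomp Require Import all_boot all_order all_algebra.
From mathcomp Require Import all_classical all_reals.
From mathcomp Require Import ereal exp.
Set Implicit Arguments. Unset Strict Implicit. Unset Printing Implicit Defensive.
Import Order.TTheory GRing.Theory Num.Theory.
Local Open Scope ring_scope.
Local Open Scope classical_set_scope.

(* T = {1..n} is modelled by 'I_n; a point of U^m is a finite function 'I_m -> U. *)

Definition kcount (U : finType) (n m : nat) (h : U -> 'I_n)
  (x : {ffun 'I_m -> U}) (i : 'I_n) : nat :=
  #|[set j : 'I_m | h (x j) == i]|.

Definition pmass (R : realType) (U : finType) (n : nat) (q : U -> R)
  (h : U -> 'I_n) (i : 'I_n) : R :=
  \sum_(u | h u == i) q u.

Definition pnorm2 (R : realType) (U : finType) (n : nat) (q : U -> R)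
  (h : U -> 'I_n) : R :=
  \sum_(i < n) (pmass q h i) ^+ 2.

Definition collstat (R : realType) (U : finType) (n m : nat) (h : U -> 'I_n)
  (x : {ffun 'I_m -> U}) : R :=
  \sum_(i < n) ((kcount h x i)%:R * ((kcount h x i)%:R - 1))
                 / (m%:R * (m%:R - 1)).

(* Talagrand's convex distance, valued in the extended reals
   (so that d_T(x, emptyset) = +oo, the usual convention). *)
Definition dT (R : realType) (U : finType) (m : nat)
  (x : {ffun 'I_m -> U}) (A : set {ffun 'I_m -> U}) : \bar R :=
  ereal_sup [set ereal_inf [set ((\sum_(j < m) alpha j * (x j != y j)%:R)%:E)
                            | y in A]
            | alpha in [set alpha : 'I_m -> R | \sum_(j < m) alpha j ^+ 2 <= 1]].

Definition Aset (R : realType) (U : finType) (n m : nat) (q : U -> R)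
  (h : U -> 'I_n) (eps : R) : set {ffun 'I_m -> U} :=
  [set y | `| @collstat R U n m h y / pnorm2 q h - 1 | <= 3 * eps].

Definition Cset (R : realType) (U : finType) (n m : nat) (q : U -> R)
  (h : U -> 'I_n) (eps s : R) : set {ffun 'I_m -> U} :=
  [set x | (@dT R U m x (@Aset R U n m q h eps) < s%:E)%E].

From HB Require Import structures.
From mathcomp Require Import all_boot all_order all_algebra.
From mathcomp Require Import all_classical all_reals.
From mathcomp Require Import ereal exp.
From mathcomp Require Import ring lra.
Set Implicit Arguments. Unset Strict Implicit. Unset Printing Implicit Defensive.
Import Order.TTheory GRing.Theory Num.Theory.
Local Open Scope ring_scope.

(* Taking the uniform weights alpha_j = m^(-1/2) in the definition of d_T,
   d_T(x, A) < s yields y in A at Hamming distance d < s sqrt m from x.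
   Changing one coordinate moves one key to another bucket, so
   k_i(x) <= k_i(y) + a_i with sum_i a_i = d, whence
   |sum_i k_i(x)^2 - sum_i k_i(y)^2| <= d (2 ||k(y)|| + d).  As y is in A,
   ||k(y)||^2 <= 2 ||p||^2 m (m - 1) + m; with ||p||^2 >= 1/n (Cauchy-Schwarz) and
   t = eps n^(-delta/2), i.e. m t^2 = n, the quadratic term d^2 and the cross
   term 2 d ||k(y)|| fit into 5 s^2 t^2 ||p||^2 and 6 s t ||p||^2 respectively,
   after division by m (m - 1). *)

Lemma sum_card_fibers (I J : finType) (f : I -> J) (P : pred I) :
  (\sum_j #|[set i | P i && (f i == j)]| = #|[set i | P i]|)%N.
Proof.
rewrite cardsE -sum1_card (partition_big f predT) //=.
by apply: eq_bigr => j _; rewrite cardsE -sum1_card.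
Qed.

(* From Lagrange's identity
   sum_i sum_j (p i - p j)^2 = 2 (#|I| sum_i p i^2 - (sum_i p i)^2). *)
Lemma sqr_sum_le_card (R : realDomainType) (I : finType) (p : I -> R) :
  (\sum_i p i) ^+ 2 <= #|I|%:R * \sum_i p i ^+ 2.
Proof.
set S1 := \sum_i p i; set S2 := \sum_i p i ^+ 2.
have inner i : \sum_j (p i - p j) ^+ 2 = #|I|%:R * p i ^+ 2 + S2 - 2 * p i * S1.
  rewrite (eq_bigr (fun j => p i ^+ 2 + (p j ^+ 2 - 2 * p i * p j))); last first.
    by move=> j _; ring.
  rewrite big_split sumrB /= sumr_const -mulr_sumr -/S1 -/S2.
  by rewrite -[#|xpredT|]/#|I|; ring.
have : 0 <= \sum_i \sum_j (p i - p j) ^+ 2.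
  by apply: sumr_ge0 => i _; apply: sumr_ge0 => j _; apply: sqr_ge0.
rewrite (eq_bigr _ (fun i _ => inner i)) sumrB big_split /= sumr_const.
rewrite -mulr_sumr -mulr_suml -mulr_sumr -/S1 -/S2 -[S2 *+ _]mulr_natr.
rewrite -[#|xpredT|]/#|I|; nra.
Qed.

Lemma sum_sqr_sub_le (R : realDomainType) (I : finType) (K L e : I -> R) (w : R) :
  (forall i, 0 <= K i) -> (forall i, 0 <= L i) -> (forall i, 0 <= e i) ->
  (forall i, L i <= K i + e i) -> 0 <= w -> \sum_i K i ^+ 2 <= w ^+ 2 ->
  \sum_i L i ^+ 2 - \sum_i K i ^+ 2 <= (\sum_i e i) * (2 * w + \sum_i e i).
Proof.
move=> K0 L0 e0 LKe w0 Kw2; set d := \sum_i e i.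
have K_le_w i : K i <= w.
  have : K i ^+ 2 <= w ^+ 2.
    apply: le_trans Kw2; rewrite (bigD1 i) //= lerDl.
    by apply: sumr_ge0 => j _; apply: sqr_ge0.
  by have := K0 i; nra.
have e_le_d i : e i <= d.
  by rewrite /d (bigD1 i) //= lerDl; apply: sumr_ge0 => j _; exact: e0.
rewrite -sumrB mulr_suml; apply: ler_sum => i _.
have := K0 i; have := L0 i; have := e0 i; have := LKe i; have := K_le_w i; have := e_le_d i.
nra.
Qed.

Definition hamming (I : finType) (T : eqType) (x y : I -> T) : nat :=
  #|[set j | x j != y j]|.

Lemma hammingC (I : finType) (T : eqType) (x y : I -> T) :
  hamming x y = hamming y x.
Proof. by apply: eq_card => j; rewrite !inE eq_sym. Qed.

Section Counts.
Variables (U : finType) (n m : nat) (h : U -> 'I_n).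
Implicit Types (x y : {ffun 'I_m -> U}) (i : 'I_n).

Lemma kcountE x i : kcount h x i = #|[set j | h (x j) == i]|.
Proof. by apply: eq_card => j; rewrite inE; apply/idP/idP; rewrite in_setE. Qed.

Lemma sum_kcount x : (\sum_i kcount h x i)%N = m.
Proof.
rewrite (eq_bigr _ (fun i _ => kcountE x i)).
rewrite -[RHS]card_ord -cardsT.
exact: (sum_card_fibers (fun j => h (x j)) predT).
Qed.

Definition moved x y i := #|[set j | (x j != y j) && (h (x j) == i)]|.

Lemma sum_moved x y : (\sum_i moved x y i)%N = hamming x y.
Proof. exact: sum_card_fibers. Qed.

Lemma kcount_le_moved x y i : (kcount h x i <= kcount h y i + moved x y i)%N.
Proof.
rewrite !kcountE; apply: leq_trans (leq_card_setU _ _); apply: subset_leq_card.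
apply/fintype.subsetP => j; rewrite !inE.
by case: (eqVneq (x j) (y j)) => [->|_] /= ->; rewrite ?orbT.
Qed.

Variable R : realType.
Implicit Type w : R.

Definition ksqsum x : R := \sum_i (kcount h x i)%:R ^+ 2.

Lemma collstatE x : collstat R h x = (ksqsum x - m%:R) / (m%:R * (m%:R - 1)).
Proof.
rewrite /collstat -mulr_suml; congr (_ / _).
have -> : m%:R = \sum_i (kcount h x i)%:R :> R by rewrite -natr_sum sum_kcount.
rewrite /ksqsum -sumrB.
by apply: eq_bigr => i _; ring.
Qed.

Lemma ksqsum_sub_le x y w : 0 <= w -> ksqsum y <= w ^+ 2 ->
  ksqsum x - ksqsum y <= (hamming x y)%:R * (2 * w + (hamming x y)%:R).
Proof.
move=> w0 yw; rewrite -sum_moved natr_sum.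
apply: sum_sqr_sub_le => // i; rewrite ?ler0n //.
by rewrite -natrD ler_nat kcount_le_moved.
Qed.

Lemma ksqsum_dist_le x y w : 0 <= w -> ksqsum y <= w ^+ 2 ->
  `|ksqsum x - ksqsum y| <= (hamming x y)%:R * (2 * w + (hamming x y)%:R).
Proof.
move=> w0 yw; case: (leP (ksqsum y) (ksqsum x)) => [yx|xy].
  by rewrite ger0_norm ?subr_ge0 // ksqsum_sub_le.
rewrite ltr0_norm ?subr_lt0 // opprB hammingC ksqsum_sub_le //.
exact: le_trans (ltW xy) yw.
Qed.

Lemma collstat_dist_le x y w : 0 <= w -> ksqsum y <= w ^+ 2 ->
  `|collstat R h x - collstat R h y|
    <= (hamming x y)%:R * (2 * w + (hamming x y)%:R) / (m%:R * (m%:R - 1)).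
Proof.
move=> w0 yw; have M0 : 0 <= m%:R * (m%:R - 1) :> R.
  by case: m => [|k]; rewrite ?mul0r // -natr1 addrK mulr_ge0.
rewrite !collstatE -mulrBl opprD addrACA subrr addr0 normrM.
rewrite [`|_^-1|]ger0_norm ?invr_ge0 //.
by apply: ler_wpM2r; rewrite ?invr_ge0 // ksqsum_dist_le.
Qed.

End Counts.

Lemma pnorm2_ge_inv (R : realType) (U : finType) (n : nat) (q : U -> R)
    (h : U -> 'I_n) :
  \sum_u q u = 1 -> 1 <= pnorm2 q h * n%:R.
Proof.
move=> q_sum1; have sum_p : \sum_i pmass q h i = 1.
  by rewrite -q_sum1 (partition_big h predT).
by have := sqr_sum_le_card (pmass q h); rewrite sum_p expr1n card_ord mulrC.
Qed.

Lemma ksqsum_le_Aset (R : realType) (U : finType) (n m : nat) (q : U -> R)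
    (h : U -> 'I_n) (eps : R) (y : {ffun 'I_m -> U}) :
  (1 < m)%N -> 0 < pnorm2 q h -> eps < 1 / 3 -> y \in Aset q h eps ->
  ksqsum h R y <= 2 * pnorm2 q h * (m%:R * (m%:R - 1)) + m%:R.
Proof.
move=> m_gt1 P_gt0 eps_lt; rewrite in_setE /Aset /= => /ler_normlP [_].
have M_gt0 : 0 < m%:R * (m%:R - 1) :> R.
  by rewrite mulr_gt0 ?subr_gt0 ?ltr1n // (ltr_nat R 0) ltnW.
move=> coll_le; have : collstat R h y / pnorm2 q h <= 2 by lra.
by rewrite ler_pdivrMr // collstatE ler_pdivrMr //; lra.
Qed.

Lemma dT_lt_hamming (R : realType) (U : finType) (m : nat)
    (A : set {ffun 'I_m -> U}) (x : {ffun 'I_m -> U}) (s : R) :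
  (0 < m)%N -> (@dT R U m x A < s%:E)%E ->
  exists2 y, A y & (hamming x y)%:R < s * Num.sqrt m%:R.
Proof.
move=> m_gt0 dT_lt; set sq := Num.sqrt m%:R.
have sq_gt0 : 0 < sq by rewrite sqrtr_gt0 ltr0n.
pose alpha : 'I_m -> R := fun=> sq^-1.
have alpha_unit : \sum_j alpha j ^+ 2 <= 1.
  rewrite /alpha sumr_const card_ord exprVn sqr_sqrtr ?ler0n //.
  by rewrite -[_ *+ m]mulr_natr mulVf ?pnatr_eq0 -?lt0n.
have : (ereal_inf [set (\sum_j alpha j * (x j != y j)%:R)%:E | y in A] < s%:E)%E.
  by apply: le_lt_trans dT_lt; apply: ereal_sup_ubound; exists alpha.
case/ereal_inf_lt => _ [y Ay <-]; rewrite lte_fin => y_lt; exists y => //.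
have -> : (hamming x y)%:R = \sum_j (x j != y j)%:R :> R.
  rewrite -natr_sum /hamming cardsE -sum1_card big_mkcond /=.
  by congr _%:R; apply: eq_bigr => j _; rewrite unfold_in; case: (_ != _).
by rewrite -ltr_pdivrMr // mulrC mulr_sumr.
Qed.

Lemma collision_bound_arith (R : rcfType) (m n P s t d w : R) :
  0 < s -> 0 < t -> 0 <= d -> 0 <= w -> 1 <= n -> n + 1 <= m -> 1 <= P * n ->
  t ^+ 2 * m = n -> d <= s * Num.sqrt m -> w ^+ 2 <= 2 * P * (m * (m - 1)) + m ->
  d * (2 * w + d) / (m * (m - 1)) <= P * (6 * s * t + 5 * s ^+ 2 * t ^+ 2).
Proof.
move=> s_gt0 t_gt0 d_ge0 w_ge0 n_ge1 nm Pn tm d_le w_le.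
set M := m * (m - 1); set r := Num.sqrt _ in d_le.
have M_gt0 : 0 < M by rewrite /M; nra.
have r2 : r ^+ 2 = m by rewrite sqr_sqrtr //; lra.
have r_ge0 : 0 <= r by exact: sqrtr_ge0.
have P_gt0 : 0 < P by nra.
have Pm : 1 <= P * (m - 1) by nra.
have d2 : d ^+ 2 <= s ^+ 2 * m.
  by rewrite -r2 -exprMn; apply: lerXn2r; rewrite ?nnegrE // mulr_ge0 // ltW.
have sqr_term : d ^+ 2 <= 5 * s ^+ 2 * t ^+ 2 * P * M.
  have -> : 5 * s ^+ 2 * t ^+ 2 * P * M = 5 * s ^+ 2 * (t ^+ 2 * m) * (P * (m - 1)).
    by rewrite /M; ring.
  have m_le : m <= 5 * n * (P * (m - 1)) by nra.
  rewrite tm; apply: le_trans d2 _.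
  have := ler_wpM2l (sqr_ge0 s) m_le; lra.
have w2 : w ^+ 2 <= 9 * n * P ^+ 2 * (m - 1) ^+ 2.
  have -> : 9 * n * P ^+ 2 * (m - 1) ^+ 2 = 9 * (P * n * (P * (m - 1)) * (m - 1)).
    by ring.
  have PPm : 1 <= P * n * (P * (m - 1)) := mulr_ege1 Pn Pm.
  have Pmm_ge0 : 0 <= P * (m - 1) * (m - 2) by apply: mulr_ge0; lra.
  have : m - 1 <= P * n * (P * (m - 1)) * (m - 1) by rewrite ler_peMl //; lra.
  have : P * (m - 1) * (m - 1) <= P * n * (P * (m - 1) * (m - 1)).
    by rewrite ler_peMl // mulr_ge0 //; lra.
  rewrite /M in w_le; lra.
have rw : r * w <= 3 * t * P * M.
  rewrite -ler_sqr ?nnegrE ?mulr_ge0 //; [|lra..].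
  have -> : (3 * t * P * M) ^+ 2 = m * (9 * (t ^+ 2 * m) * P ^+ 2 * (m - 1) ^+ 2).
    by rewrite /M; ring.
  by rewrite exprMn r2 tm; apply: (ler_wpM2l _ w2); lra.
have cross_term : d * w <= 3 * s * t * P * M.
  apply: le_trans (ler_wpM2r w_ge0 d_le) _.
  have := ler_wpM2l (ltW s_gt0) rw; rewrite mulrA; lra.
rewrite ler_pdivrMr //.
have -> : d * (2 * w + d) = 2 * (d * w) + d ^+ 2 by ring.
have -> : P * (6 * s * t + 5 * s ^+ 2 * t ^+ 2) * M
          = 2 * (3 * s * t * P * M) + 5 * s ^+ 2 * t ^+ 2 * P * M by ring.
lra.
Qed.

Lemma rescaled_eps (R : realType) (n m eps delta : R) :
  1 <= n -> 0 < eps -> eps < 1 / 3 -> 0 < delta ->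
  m = eps ^-2 * n `^ (1 + delta) ->
  let t := eps / n `^ (delta / 2) in
  [/\ 0 < t, t ^+ 2 * m = n, n + 1 <= m & n `^ delta = n `^ (delta / 2) ^+ 2].
Proof.
move=> n_ge1 eps_gt0 eps_lt delta_gt0 m_def; set r := n `^ (delta / 2) => t.
have r_ge1 : 1 <= r by rewrite -(powRr0 n) ler_powR //; lra.
have r2 : n `^ delta = r ^+ 2.
  by rewrite -powR_mulrn ?powR_ge0 // -powRrM divfK.
have t_gt0 : 0 < t by rewrite /t divr_gt0 //; lra.
have tm : t ^+ 2 * m = n.
  have n_gt0 : 0 < n by lra.
  rewrite m_def powRD; last by rewrite (gt_eqF n_gt0) implybT.
  rewrite powRr1 ?ltW // r2 /t.
  by field; rewrite !gt_eqF //; lra.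
split=> //.
have t_le : t <= eps.
  by rewrite /t ler_pdivrMr ?ler_peMr //; lra.
have t2 : t ^+ 2 <= 1 / 9 by rewrite expr2; nra.
have m_ge0 : 0 <= m by rewrite m_def mulr_ge0 ?powR_ge0 // invr_ge0 exprn_ge0 // ltW.
have := ler_wpM2r m_ge0 t2; rewrite tm; lra.
Qed.

Local Open Scope classical_set_scope.

Theorem lemma4 (R : realType) (U : finType) (q : U -> R) (n : nat)
  (h : U -> 'I_n) (eps delta s : R) (m : nat)
  (q_ge0 : forall u, 0 <= q u) (q_sum1 : \sum_(u : U) q u = 1)
  (hn : (24 < n)%N) (heps0 : 0 < eps) (heps1 : eps < 1 / 3)
  (hdelta : 0 < delta) (hs : 0 < s)
  (hm : m%:R = eps ^-2 * (n%:R `^ (1 + delta))) :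
  forall x, x \in @Cset R U n m q h eps s ->
  exists2 y, y \in @Aset R U n m q h eps &
    `| @collstat R U n m h x - @collstat R U n m h y |
      <= eps * pnorm2 q h *
         (6 * s / (n%:R `^ (delta / 2)) + 5 * s ^+ 2 * eps / (n%:R `^ delta)).
Proof.
move=> x; rewrite in_setE /Cset /= => dT_lt.
set P := pnorm2 q h.
have n_ge1 : 1 <= n%:R :> R by rewrite ler1n (ltn_trans _ hn).
have [t_gt0 tm nm ->] := rescaled_eps n_ge1 heps0 heps1 hdelta hm.
set t := _ / _ in t_gt0 tm *.
have Pn : 1 <= P * n%:R := pnorm2_ge_inv h q_sum1.
have P_gt0 : 0 < P by rewrite -(@pmulr_lgt0 _ n%:R); lra.
have m_gt1 : (1 < m)%N by rewrite -(ltr_nat R); lra.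
have [y Ay d_lt] := dT_lt_hamming (ltnW m_gt1) dT_lt.
have yA : y \in Aset q h eps by rewrite in_setE.
exists y => //.
have bound_ge0 : 0 <= 2 * P * (m%:R * (m%:R - 1)) + m%:R.
  by rewrite addr_ge0 ?ler0n // !mulr_ge0 //; lra.
pose w := Num.sqrt (2 * P * (m%:R * (m%:R - 1)) + m%:R).
have w2 : w ^+ 2 = 2 * P * (m%:R * (m%:R - 1)) + m%:R := sqr_sqrtr bound_ge0.
have yw : ksqsum h R y <= w ^+ 2.
  by rewrite w2; exact: ksqsum_le_Aset m_gt1 P_gt0 heps1 yA.
apply: le_trans (collstat_dist_le x (sqrtr_ge0 _) yw) _.
have -> : eps * P * (6 * s / n%:R `^ (delta / 2)
                      + 5 * s ^+ 2 * eps / n%:R `^ (delta / 2) ^+ 2)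
          = P * (6 * s * t + 5 * s ^+ 2 * t ^+ 2).
  by rewrite /t; field; rewrite gt_eqF // powR_gt0 //; lra.
apply: (@collision_bound_arith _ m%:R n%:R) => //; first exact: ltW.
by rewrite w2.
Qed.
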